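(* Let $0<q<1$, $\alpha>-1$ and let $n\ge0$ be an integer. Then \[ \det\left((q^{\alpha+1};q)_{j+k}\,q^{-\binom{j+k+1}{2}-\alpha(j+k)}\right)_{j,k=0}^{n}=\frac{\prod_{m=0}^{n}(q;q)_m\,(q^{\alpha+1};q)_m}{q^{\,n(n+1)(4n+6\alpha+5)/6}} . \]
   Context: For a complex $a$ and $0<q<1$, $(a;q)_\infty=\prod_{i=0}^\infty(1-aq^i)$ and $(a;q)_m=(a;q)_\infty/(aq^m;q)_\infty=\prod_{i=0}^{m-1}(1-aq^i)$ for integers $m\ge0$. *)

From HB Require Import structures.
From Stdlib Require Import Reals ClassicalEpsilon FunctionalExtensionality.
From mathcomp Require Import all_boot all_order all_algebra.

Set Implicit Arguments.
Unset Strict Implicit.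
Unset Printing Implicit Defensive.

(* R_scope and ring_scope share the key %R; give Stdlib's R_scope the key %Re *)
Delimit Scope R_scope with Re.

Definition Req_bool (x y : R) : bool := if Req_EM_T x y then true else false.
Lemma Req_boolP : Equality.axiom Req_bool.
Proof. move=> x y; rewrite /Req_bool; case: Req_EM_T => h; by constructor. Qed.
HB.instance Definition _ := hasDecEq.Build R Req_boolP.

Definition R_find (P : pred R) (n : nat) : option R :=
  match excluded_middle_informative (exists x, P x) with
  | left h => Some (proj1_sig (constructive_indefinite_description _ h))
  | right _ => None
  end.
Lemma R_find_correct P n x : R_find P n = Some x -> P x.
Proof.
rewrite /R_find; case: excluded_middle_informative => // h [<-].
exact: proj2_sig (constructive_indefinite_description _ h).
Qed.
Lemma R_find_complete (P : pred R) : (exists x, P x) -> exists n, R_find P n.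
Proof. move=> h; exists 0%N; rewrite /R_find; by case: excluded_middle_informative. Qed.
Lemma R_find_ext (P Q : pred R) : P =1 Q -> R_find P =1 R_find Q.
Proof. move=> h n; have -> : P = Q by apply: functional_extensionality. by []. Qed.
HB.instance Definition _ :=
  hasChoice.Build R R_find_correct R_find_complete R_find_ext.

Lemma R_addA : ssrfun.associative Rplus. Proof. move=> x y z; rewrite Rplus_assoc //. Qed.
Lemma R_addC : ssrfun.commutative Rplus. Proof. exact: Rplus_comm. Qed.
Lemma R_add0 : ssrfun.left_id R0 Rplus. Proof. exact: Rplus_0_l. Qed.
Lemma R_addN : ssrfun.left_inverse R0 Ropp Rplus. Proof. exact: Rplus_opp_l. Qed.
HB.instance Definition _ := GRing.isZmodule.Build R R_addA R_addC R_add0 R_addN.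

Lemma R_mulA : ssrfun.associative Rmult. Proof. move=> x y z; rewrite Rmult_assoc //. Qed.
Lemma R_mulC : ssrfun.commutative Rmult. Proof. exact: Rmult_comm. Qed.
Lemma R_mul1 : ssrfun.left_id R1 Rmult. Proof. exact: Rmult_1_l. Qed.
Lemma R_mulDl : ssrfun.left_distributive Rmult Rplus. Proof. move=> x y z; exact: Rmult_plus_distr_r. Qed.
Lemma R_one_neq0 : (R1 : R) != R0.
Proof. apply/eqP; exact: R1_neq_R0. Qed.
HB.instance Definition _ :=
  GRing.Zmodule_isComNzRing.Build R R_mulA R_mulC R_mul1 R_mulDl R_one_neq0.

Fixpoint qpoch (a q : R) (m : nat) : R :=
  match m with
  | O => R1
  | S m' => (qpoch a q m' * (1 - a * q ^ m'))%Re
  end.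

From HB Require Import structures.
From Stdlib Require Import Reals Lra.
From mathcomp Require Import all_boot all_order all_algebra.
Import GRing.Theory.

(* Write a = q^(alpha+1) and w_m = -binomial(m+1,2) - alpha m.
   Splitting (a;q)_(j+k) = (a;q)_k (a q^k;q)_j and pulling q^k out of each
   factor of the second q-shifted factorial shows that the (j,k) entry is
       q^(w_j) * prod_(i<j) (q^-k - a q^i) * (a;q)_k q^(w_k).
   The middle factor is the j-th Newton basis polynomial with nodes a q^i,
   evaluated at x_k = q^-k.  A general determinant identity (valid over any
   commutative ring) says that this evaluation matrix has the Vandermonde
   determinant prod_(i<j) (x_j - x_i) of the points x_k, and here
   prod_(i<j) (q^-j - q^-i) = q^(-j^2) (q;q)_j.  Collecting the row and column
   scalings, the determinant is prod_m (q;q)_m (a;q)_m q^(2 w_m - m^2), and the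
   exponents sum to -n(n+1)(4n+6alpha+5)/6.  The identity holds for every
   q > 0 and every real alpha. *)

Section Determinants.
Local Open Scope ring_scope.

Lemma prod_triangular (R : comPzRingType) (f : nat -> nat -> R) n :
  \prod_(i < n) \prod_(j < n | (i < j)%N) f i j = \prod_(j < n) \prod_(i < j) f i j.
Proof.
elim: n => [|n IH]; first by rewrite !big_ord0.
have last_row : \prod_(j < n.+1 | (n < j)%N) f n j = 1.
  by apply: big1 => j; rewrite ltnNge -ltnS ltn_ord.
rewrite big_ord_recr [RHS]big_ord_recr /= last_row mulr1 -IH -big_split /=.
by apply: eq_bigr => i _; rewrite big_mkcond big_ord_recr /= -big_mkcond ltn_ord.
Qed.

Lemma det_Vandermonde_nat (R : comPzRingType) n (x : nat -> R) :
  \det (Vandermonde n (\row_(k < n) x k)) = \prod_(j < n) \prod_(i < j) (x j - x i).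
Proof.
rewrite det_Vandermonde -(@prod_triangular _ (fun i j => x j - x i)).
by apply: eq_bigr => i _; apply: eq_bigr => j _; rewrite !mxE.
Qed.

Lemma det_scaled_mx (R : comPzRingType) n (d1 d2 : 'I_n -> R) (A : 'I_n -> 'I_n -> R) :
  \det (\matrix_(j, k) (d1 j * A j k * d2 k))
  = \prod_j d1 j * \det (\matrix_(j, k) A j k) * \prod_k d2 k.
Proof.
have -> : \matrix_(j, k) (d1 j * A j k * d2 k)
          = diag_mx (\row_j d1 j) *m \matrix_(j, k) A j k *m diag_mx (\row_k d2 k).
  by apply/matrixP => j k; rewrite mul_mx_diag mul_diag_mx !mxE.
by rewrite !det_mulmx !det_diag; congr (_ * _ * _); apply: eq_bigr => i _; rewrite mxE.
Qed.

(* The matrix of the Newton basis polynomials prod_(i<j) (X - b i), j < n,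
   evaluated at the nodes x k has the Vandermonde determinant of the nodes:
   it is L V with V the Vandermonde matrix and L unitriangular, L's j-th row
   being the coefficients of the monic polynomial of degree j. *)
Lemma det_newton_basis (R : comNzRingType) n (x b : nat -> R) :
  \det (\matrix_(j < n, k < n) \prod_(i < j) (x k - b i))
  = \prod_(j < n) \prod_(i < j) (x j - x i).
Proof.
pose g (j : nat) : {poly R} := \prod_(i < j) ('X - (b i)%:P).
have size_g j : size (g j) = j.+1.
  by rewrite size_prod_XsubC [index_enum _]unlock -enumT size_enum_ord.
pose L := \matrix_(j < n, i < n) (g j)`_i.
have factor : \matrix_(j < n, k < n) \prod_(i < j) (x k - b i)
              = L *m Vandermonde n (\row_(k < n) x k).
  apply/matrixP => j k; rewrite !mxE.
  under [RHS]eq_bigr => i _ do rewrite !mxE.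
  rewrite -(horner_coef_wide _ (p := g j)); last by rewrite size_g ltn_ord.
  by rewrite horner_prod; apply: eq_bigr => i _; rewrite hornerXsubC.
have det_L : \det L = 1.
  rewrite det_trig; last first.
    by apply/is_trig_mxP => i k lt_ik; rewrite mxE nth_default // size_g.
  apply: big1 => i _; rewrite mxE.
  have /monicP := monic_prod_XsubC (index_enum 'I_i) xpredT b.
  by rewrite lead_coefE size_g.
by rewrite factor det_mulmx det_L mul1r det_Vandermonde_nat.
Qed.
End Determinants.

Lemma mulRE (x y : R) : (x * y)%R = (x * y)%Re. Proof. by []. Qed.
Lemma expRE (x : R) n : (x ^+ n)%R = (x ^ n)%Re.
Proof. by elim: n => [|n IH] //; rewrite exprS IH. Qed.

Section QSeries.
Local Open Scope R_scope.

Lemma qpoch_add (a q : R) j k :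
  qpoch a q (j + k) = qpoch a q k * qpoch (a * q ^ k) q j.
Proof.
elim: j => [|j IH] /=; first by rewrite add0n Rmult_1_r.
rewrite IH pow_add; ring.
Qed.

(* (a q^k;q)_j, rewritten as a Newton-basis polynomial in the node q^-k. *)
Lemma qpoch_shift (a q : R) k j : q <> 0 ->
  qpoch (a * q ^ k) q j = (q ^ k) ^ j * (\prod_(i < j) (/ q ^ k - a * q ^ i)%Re)%R.
Proof.
move=> q0; have qk0 : q ^ k <> 0 by apply: pow_nonzero.
elim: j => [|j IH] /=; first by rewrite big_ord0 Rmult_1_l.
rewrite big_ord_recr /= IH mulRE.
set P := (\prod_(i < j) _)%R.
have -> : 1 - a * q ^ k * q ^ j = q ^ k * (/ q ^ k - a * q ^ j) by field.
ring.
Qed.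

Lemma qpoch_q_reversed (q : R) j : (\prod_(i < j) (1 - q ^ (j - i))%Re)%R = qpoch q q j.
Proof.
elim: j => [|j IH]; first by rewrite big_ord0.
rewrite big_ord_recl /=.
under eq_bigr => i _ do rewrite /bump /= add1n subSS.
rewrite IH mulRE; ring.
Qed.

Lemma prod_inv_pow_diff (q : R) j : q <> 0 ->
  (\prod_(i < j) (/ q ^ j - / q ^ i)%Re)%R = (/ q ^ j) ^ j * qpoch q q j.
Proof.
move=> q0; rewrite -qpoch_q_reversed.
have -> : (/ q ^ j) ^ j = (\prod_(i < j) / q ^ j)%R by rewrite prodr_const card_ord expRE.
rewrite -mulRE -big_split /=.
apply: eq_bigr => i _.
have qji : q ^ j = q ^ i * q ^ (j - i) by rewrite -pow_add plusE subnKC // ltnW.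
rewrite mulRE qji.
have qi0 := pow_nonzero q i q0; have qji0 := pow_nonzero q (j - i) q0.
by field; split.
Qed.

Lemma INR_bin2 m : INR 'C(m.+1, 2) = INR m * (INR m + 1) / 2.
Proof.
elim: m => [|m IH]; first by rewrite /=; field.
rewrite binS bin1 plus_INR IH S_INR; field.
Qed.

Definition weight_exp (alpha : R) (m : nat) : R := - INR 'C(m.+1, 2) - alpha * INR m.

(* The power of q in the (j,k) entry times q^(jk) is q^(w_j) q^(w_k), since
   binomial(j+k+1, 2) = binomial(j+1, 2) + binomial(k+1, 2) + jk. *)
Lemma weight_split (q alpha : R) j k : 0 < q ->
  Rpower q (- INR 'C(j + k + 1, 2) - alpha * INR (j + k)) * (q ^ k) ^ j
  = Rpower q (weight_exp alpha j) * Rpower q (weight_exp alpha k).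
Proof.
move=> q0; rewrite -pow_mult -Rpower_pow // -!Rpower_plus; f_equal.
rewrite /weight_exp addn1 !INR_bin2 plus_INR mult_INR; field.
Qed.

Lemma entry_factor (a q alpha : R) j k : 0 < q ->
  qpoch a q (j + k) * Rpower q (- INR 'C(j + k + 1, 2) - alpha * INR (j + k))
  = Rpower q (weight_exp alpha j) * (\prod_(i < j) (/ q ^ k - a * q ^ i)%Re)%R
    * (qpoch a q k * Rpower q (weight_exp alpha k)).
Proof.
move=> q0; rewrite qpoch_add qpoch_shift; last lra.
set P := (\prod_(i < j) _)%R.
transitivity (qpoch a q k * P
  * (Rpower q (- INR 'C(j + k + 1, 2) - alpha * INR (j + k)) * (q ^ k) ^ j)).
  ring.
rewrite weight_split //; ring.
Qed.

Lemma diagonal_factor (a q alpha : R) m : 0 < q ->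
  Rpower q (weight_exp alpha m) * ((/ q ^ m) ^ m * qpoch q q m)
    * (qpoch a q m * Rpower q (weight_exp alpha m))
  = qpoch q q m * qpoch a q m * Rpower q (2 * weight_exp alpha m - INR m * INR m).
Proof.
move=> q0.
have -> : (/ q ^ m) ^ m = Rpower q (- (INR m * INR m)).
  by rewrite Rpower_Ropp -mult_INR Rpower_pow // pow_mult pow_inv.
rewrite /Rminus Rpower_plus (_ : 2 * _ = weight_exp alpha m + weight_exp alpha m); last ring.
rewrite Rpower_plus; ring.
Qed.

Lemma prod_diagonal_weight (q alpha : R) N : 0 < q ->
  (\prod_(m < N.+1) Rpower q (2 * weight_exp alpha m - INR m * INR m))%R
  = / Rpower q (INR N * (INR N + 1) * (4 * INR N + 6 * alpha + 5) / 6).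
Proof.
move=> q0; rewrite -Rpower_Ropp; elim: N => [|N IH].
  by rewrite big_ord_recr big_ord0 /= mul1r /weight_exp INR_bin2 /=; f_equal; field.
rewrite big_ord_recr /= -/(INR N.+1) IH mulRE -Rpower_plus; f_equal.
rewrite /weight_exp INR_bin2 !S_INR; field.
Qed.

End QSeries.

Theorem mainTheorem8 (q alpha : R) (n : nat)
  (hq0 : (0 < q)%Re) (hq1 : (q < 1)%Re) (halpha : (-1 < alpha)%Re) :
  (\det (\matrix_(j < n.+1, k < n.+1)
          (qpoch (Rpower q (alpha + 1)) q (j + k)
           * Rpower q (- INR 'C(j + k + 1, 2) - alpha * INR (j + k)))%Re))%R
  = Rdiv
      (\prod_(m < n.+1) (qpoch q q m * qpoch (Rpower q (alpha + 1)) q m)%Re)%R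
      (Rpower q (INR n * (INR n + 1) * (4 * INR n + 6 * alpha + 5) / 6)%Re).
Proof.
set a := Rpower q (alpha + 1).
have q0 : q <> 0%Re by lra.
under eq_mx => j k do rewrite entry_factor //.
rewrite det_scaled_mx.
rewrite (@det_newton_basis _ _ (fun k => / q ^ k)%Re (fun i => a * q ^ i)%Re).
under [X in (_ * X * _)%R]eq_bigr => j _ do rewrite prod_inv_pow_diff //.
rewrite -!big_split /=.
rewrite (eq_bigr _ (fun (m : 'I_n.+1) _ => diagonal_factor a q alpha m hq0)).
by rewrite big_split /= prod_diagonal_weight.
Qed.
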